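(* Let $k\ge 0$ and $m=2k+1$, and let $ER_m(\hat K)=P_m(\hat K)+\mathrm{span}\{\hat x^{m}\hat y-\hat x\hat y^{m},\ \hat x^{m+1}-\hat y^{m+1}\}$. If $\hat v\in ER_m(\hat K)$ vanishes at all points of $G\cup I$, then $\hat v\equiv 0$.
   Context: $\hat K=[-1,1]^2$; $P_m(\hat K)$ is the space of polynomials of total degree $\le m$. Let $g_{-k},\dots,g_k$ be the zeros of the Legendre polynomial of degree $2k+1$ on $[-1,1]$. $G=\{(1,g_i),(-1,g_i),(g_i,1),(g_i,-1): i=-k,\dots,k\}$. $I$ is a set of $(2k-1)(k-1)$ interior points of $\hat K$ unisolvent for $P_{2k-3}(\hat K)$ (every polynomial in $P_{2k-3}(\hat K)$ is uniquely determined by its values on $I$); $I=\emptyset$ when $k\le1$. *)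

From HB Require Import structures.
From mathcomp Require Import all_boot all_order all_algebra.
Set Implicit Arguments. Unset Strict Implicit. Unset Printing Implicit Defensive.
Import Order.TTheory GRing.Theory Num.Theory.
Local Open Scope ring_scope.

Definition legendre (R : fieldType) (n : nat) : {poly R} :=
  ((2 ^ n * n`!)%N%:R)^-1 *: (('X ^+ 2 - 1) ^+ n)^`(n).

Definition inP (R : ringType) (m : nat) (f : R -> R -> R) : Prop :=
  exists c : 'I_m.+1 -> 'I_m.+1 -> R,
    forall x y, f x y = \sum_(i < m.+1) \sum_(j < m.+1 | (i + j <= m)%N)
                          c i j * x ^+ i * y ^+ j.

Definition inER (R : ringType) (m : nat) (f : R -> R -> R) : Prop :=
  exists (p : R -> R -> R) (a b : R), inP m p /\
    forall x y, f x y = p x y + a * (x ^+ m * y - x * y ^+ m)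
                              + b * (x ^+ m.+1 - y ^+ m.+1).

From HB Require Import structures.
From mathcomp Require Import all_boot all_order all_algebra.
From mathcomp Require Import zify ring lra.
Import Order.TTheory GRing.Theory Num.Theory.
Set Implicit Arguments. Unset Strict Implicit. Unset Printing Implicit Defensive.
Local Open Scope ring_scope.

(* On each edge of the square v is a polynomial of degree at most m+1 in the
   edge variable vanishing at the m Gauss points, i.e. at the zeros of the
   node polynomial N = prod (X - g_i); hence it is (alpha t + beta) N(t).  The
   node polynomial is proportional to the Legendre polynomial P_m, so
   N(-1) = -N(1) != 0.  The top coefficients alpha are -b on the vertical and
   b on the horizontal edges, and comparing the sums of the corner values
   gives b = 0; then the traces are beta N with beta affine in a, and the
   four corner values force a = 0 and every beta = 0.  Thus v lies in P_m
   and vanishes on the boundary, so v = (x^2-1)(y^2-1) q with q in P_(m-4)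
   (and v = 0 when m <= 3); q vanishes on I, hence q = 0 by unisolvence. *)

Section TotalDegree.
Variable R : comNzRingType.
Implicit Types (d : nat) (f h : R -> R -> R).

Lemma inP_ext d f h : (forall x y, f x y = h x y) -> inP d f -> inP d h.
Proof. by move=> fh [c Hc]; exists c => x y; rewrite -fh Hc. Qed.

Lemma inP0 d : inP d (fun _ _ : R => 0).
Proof.
exists (fun _ _ => 0) => x y.
by rewrite big1 // => i _; rewrite big1 // => j _; rewrite !mul0r.
Qed.

Lemma inPD d f h : inP d f -> inP d h -> inP d (fun x y => f x y + h x y).
Proof.
move=> [c Hc] [c' Hc']; exists (fun i j => c i j + c' i j) => x y.
rewrite Hc Hc' -big_split; apply: eq_bigr => i _.
by rewrite -big_split; apply: eq_bigr => j _; rewrite !mulrDl.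
Qed.

Lemma inP_sum d (I : Type) (r : seq I) (P : pred I) (F : I -> R -> R -> R) :
  (forall i, P i -> inP d (F i)) -> inP d (fun x y => \sum_(i <- r | P i) F i x y).
Proof.
move=> FP; elim: r => [|i r IH].
  by apply: inP_ext (inP0 d) => x y; rewrite big_nil.
have [Pi|nPi] := boolP (P i).
  by apply: inP_ext (inPD (FP i Pi) IH) => x y; rewrite big_cons Pi.
by apply: inP_ext IH => x y; rewrite big_cons (negbTE nPi).
Qed.

Lemma inP_monomial d (a : R) (l j : nat) : (l + j <= d)%N ->
  inP d (fun x y => a * (x ^+ l * y ^+ j)).
Proof.
move=> ljd; have [lo jo] : (l < d.+1)%N /\ (j < d.+1)%N by lia.
exists (fun i j' => ((i == Ordinal lo) && (j' == Ordinal jo))%:R * a) => x y.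
rewrite (bigD1 (Ordinal lo)) //= [X in _ + X]big1 ?addr0; last first.
  by move=> i /negbTE iNl; rewrite big1 // => j' _; rewrite iNl !mul0r.
rewrite (bigD1 (Ordinal jo)) //= [X in _ + X]big1 ?addr0; last first.
  by move=> j' /andP[_ /negbTE ->]; rewrite eqxx !mul0r.
by rewrite !eqxx mul1r mulrA.
Qed.

Lemma inP_swap d f : inP d f -> inP d (fun x y => f y x).
Proof.
move=> [c Hc]; exists (fun i j => c j i) => x y.
rewrite Hc; under eq_bigr do rewrite big_mkcond.
rewrite exchange_big /=; apply: eq_bigr => i _.
rewrite [RHS]big_mkcond /=; apply: eq_bigr => j _.
by rewrite addnC; case: ifP => // _; ring.
Qed.

Lemma inP0_const f : inP 0 f -> forall x y x' y', f x y = f x' y'.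
Proof.
move=> [c Hc]; suff fc x y : f x y = c ord0 ord0 by move=> x y x' y'; rewrite !fc.
by rewrite Hc big_ord1 big_mkcond big_ord1 /= !expr0 !mulr1.
Qed.

(* Restricting f in P_d to a vertical line x = x0 gives a univariate
   polynomial of degree at most d whose coefficient of y^d does not depend
   on x0 (it is the coefficient of the monomial y^d of f). *)
Lemma inP_rows d f : inP d f ->
  exists (F : R -> {poly R}) (c : R), forall x0,
    [/\ forall y, f x0 y = (F x0).[y], (size (F x0) <= d.+1)%N & (F x0)`_d = c].
Proof.
move=> [c Hc].
pose F x0 := \sum_(i < d.+1) \sum_(j < d.+1 | (i + j <= d)%N)
               (c i j * x0 ^+ i) *: ('X^j : {poly R}).
exists F, (\sum_(i < d.+1) \sum_(j < d.+1 | (i + j <= d)%N) c i j * (d == j)%:R).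
move=> x0; split.
- move=> y; rewrite Hc horner_sum; apply: eq_bigr => i _.
  by rewrite horner_sum; apply: eq_bigr => j _; rewrite hornerZ hornerXn.
- apply/leq_sizeP => n dn; rewrite coef_sum big1 // => i _.
  rewrite coef_sum big1 // => j _; rewrite coefZ coefXn.
  have /negbTE -> : n != j by have := ltn_ord j; lia.
  by rewrite mulr0.
- rewrite coef_sum; apply: eq_bigr => i _; rewrite coef_sum; apply: eq_bigr => j ijd.
  rewrite coefZ coefXn; have [dj|] := eqVneq d j; last by rewrite !mulr0.
  have i0 : nat_of_ord i = 0%N by lia.
  by rewrite i0 expr0 mulr1; apply: mulr1.
Qed.

(* If f in P_d vanishes on the line x = t, then f = (x - t) g with g in
   P_(d-1); g is given explicitly by x^i - t^i = (x - t) sum_l x^(i-1-l) t^l. *)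
Lemma inP_div_line d f (t : R) : inP d f -> (forall y, f t y = 0) ->
  exists g, inP d.-1 g /\ forall x y, f x y = (x - t) * g x y.
Proof.
move=> [c Hc] ft0.
exists (fun x y => \sum_(i < d.+1) \sum_(j < d.+1 | (i + j <= d)%N)
          \sum_(l < i) (c i j * t ^+ l) * (x ^+ (i.-1 - l) * y ^+ j)); split.
  apply: inP_sum => i _; apply: inP_sum => j ijd; apply: inP_sum => l _.
  by apply: inP_monomial; have := ltn_ord l; lia.
move=> x y; have -> : f x y = f x y - f t y by rewrite ft0 subr0.
rewrite !Hc -sumrB mulr_sumr.
apply: eq_bigr => i _; rewrite -sumrB mulr_sumr; apply: eq_bigr => j _.
rewrite -mulrBl -mulrBr subrXX mulrCA -mulrA; congr (_ * _).
by rewrite mulr_sumr mulr_suml; apply: eq_bigr => l _; ring.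
Qed.

Lemma inP_div_line_y d f (t : R) : inP d f -> (forall x, f x t = 0) ->
  exists g, inP d.-1 g /\ forall x y, f x y = (y - t) * g x y.
Proof.
move=> /inP_swap fP ft0; have [g [gP fg]] := inP_div_line fP ft0.
by exists (fun x y => g y x); split; [exact: inP_swap | move=> x y; rewrite -fg].
Qed.

End TotalDegree.

Section SquareBoundary.
Variable R : realDomainType.
Implicit Types (d : nat) (f : R -> R -> R).

(* A univariate polynomial vanishing everywhere except possibly at 1 and -1
   is zero: it has infinitely many roots 2, 3, 4, ... *)
Lemma poly_eq0_off_ends (p : {poly R}) :
  (forall x, x != 1 -> x != -1 -> p.[x] = 0) -> p = 0.
Proof.
move=> p0; apply/eqP; apply: contraT => pN0.
pose rs := [seq i.+2%:R : R | i <- iota 0 (size p)].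
suff : (size rs < size p)%N by rewrite size_map size_iota ltnn.
apply: max_poly_roots pN0 _ _.
  apply/allP => _ /mapP[i _ ->]; apply/eqP/p0; first by rewrite pnatr_eq1.
  by apply/eqP; have := ler0n R i; rewrite -addn2 natrD; lra.
by rewrite map_inj_uniq ?iota_uniq // => i j /eqP; rewrite eqr_nat => /eqP [].
Qed.

Lemma inP_line_vanish d f (t : R) : inP d f ->
  (forall x, x != 1 -> x != -1 -> f x t = 0) -> forall x, f x t = 0.
Proof.
move=> /inP_swap /inP_rows [F [c F_f]] ft0 x.
have FP y : forall x, f x y = (F y).[x] by move=> x'; case: (F_f y) => ->.
suff Ft0 : F t = 0 by rewrite FP Ft0 horner0.
by apply: poly_eq0_off_ends => x' x'1 x'm1; rewrite -FP ft0.
Qed.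

(* A polynomial of P_d vanishing on the boundary of the square [-1,1]^2 is a
   multiple of the bubble (x^2 - 1)(y^2 - 1) by a polynomial of P_(d-4); in
   particular it is zero when d <= 3.  We divide out the four edges one at a
   time; after each division the quotient still vanishes on the remaining
   edges away from the corners, hence on the whole edges (inP_line_vanish). *)
Lemma inP_boundary_factor d f : inP d f ->
  (forall y, f 1 y = 0) -> (forall y, f (-1) y = 0) ->
  (forall x, f x 1 = 0) -> (forall x, f x (-1) = 0) ->
  ((d <= 3)%N -> forall x y, f x y = 0) /\
  exists q, inP (d - 4) q /\ forall x y, f x y = (x ^+ 2 - 1) * (y ^+ 2 - 1) * q x y.
Proof.
move=> fP f_x1 f_xm1 f_y1 f_ym1.
have off_ends (x : R) : x != 1 -> x != -1 -> (x - 1) * (x + 1) != 0.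
  by move=> x1 xm1; rewrite mulf_neq0 ?subr_eq0 ?addr_eq0.
have m2_neq0 : (-1 - 1 : R) != 0 by apply/eqP; lra.
have [g1 [g1P f_g1]] := inP_div_line fP f_x1.
have g1_xm1 y : g1 (-1) y = 0.
  by apply/eqP; have := f_xm1 y; rewrite f_g1 => /eqP; rewrite mulf_eq0 (negbTE m2_neq0).
have [g2 [g2P g1_g2]] := inP_div_line g1P g1_xm1.
have f_g2 x y : f x y = (x - 1) * (x + 1) * g2 x y by rewrite f_g1 g1_g2 opprK mulrA.
have g2_y1 : forall x, g2 x 1 = 0.
  apply: inP_line_vanish g2P _ => x x1 xm1; apply/eqP.
  by have := f_y1 x; rewrite f_g2 => /eqP; rewrite mulf_eq0 (negbTE (off_ends x x1 xm1)).
have [g3 [g3P g2_g3]] := inP_div_line_y g2P g2_y1.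
have g3_ym1 : forall x, g3 x (-1) = 0.
  apply: inP_line_vanish g3P _ => x x1 xm1; apply/eqP.
  have := f_ym1 x; rewrite f_g2 g2_g3 => /eqP.
  by rewrite mulf_eq0 (negbTE (off_ends x x1 xm1)) mulf_eq0 (negbTE m2_neq0).
have [g4 [g4P g3_g4]] := inP_div_line_y g3P g3_ym1.
split; last first.
  exists g4; split; first by rewrite (_ : d - 4 = d.-1.-1.-1.-1)%N //; lia.
  by move=> x y; rewrite f_g2 g2_g3 g3_g4 opprK; ring.
have const0 n (g : R -> R -> R) :
    inP n g -> n = 0%N -> forall x y x' y', g x y = g x' y'.
  by move=> + n0; rewrite n0; exact: inP0_const.
move=> d_le3 x y; have [d0|d1|d2|d3] : [\/ d = 0, d = 1, d = 2 | d = 3]%N.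
  by move: d_le3; case: (d) => [|[|[|[|n]]]] // _; [exact: Or41|exact: Or42|exact: Or43|exact: Or44].
- by rewrite (const0 _ _ fP d0 x y 1 y) f_x1.
- by rewrite f_g1 (const0 _ _ g1P _ x y (-1) y) ?g1_xm1 ?mulr0 // d1.
- by rewrite f_g2 (const0 _ _ g2P _ x y x 1) ?g2_y1 ?mulr0 // d2.
- by rewrite f_g2 g2_g3 (const0 _ _ g3P _ x y x (-1)) ?g3_ym1 ?mulr0 // d3.
Qed.

End SquareBoundary.

Section LegendreEnds.
Variable R : numFieldType.

Lemma derivn_XsubC_exp_at n (c : R) (h : {poly R}) :
  ((('X - c%:P) ^+ n * h)^`(n)).[c] = n`!%:R * h.[c].
Proof.
elim: n h => [|n IH] h; first by rewrite expr0 mul1r derivn0 mul1r.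
rewrite derivSn derivM deriv_exp derivXsubC mul1r /=.
have -> : ('X - c%:P) ^+ n *+ n.+1 * h + ('X - c%:P) ^+ n.+1 * h^`()
   = ('X - c%:P) ^+ n * (h *+ n.+1 + ('X - c%:P) * h^`()) by rewrite exprS; ring.
rewrite IH hornerD hornerMn hornerM hornerXsubC subrr mul0r addr0.
by rewrite factS natrM -mulr_natr; ring.
Qed.

Lemma legendre_ends n :
  (legendre R n).[1] = 1 /\ (legendre R n).[-1] = (-1) ^+ n.
Proof.
have sq_at1 : ('X ^+ 2 - 1 : {poly R}) ^+ n = ('X - 1%:P) ^+ n * ('X - (-1)%:P) ^+ n.
  by rewrite -exprMn polyCN polyC1; congr (_ ^+ _); ring.
have sq_atm1 : ('X ^+ 2 - 1 : {poly R}) ^+ n = ('X - (-1)%:P) ^+ n * ('X - 1%:P) ^+ n.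
  by rewrite sq_at1 mulrC.
have K_inv : ((2 ^ n * n`!)%N%:R : R)^-1 * (n`!%:R * 2 ^+ n) = 1.
  rewrite natrM natrX [n`!%:R * _]mulrC mulVf // mulf_neq0 ?expf_neq0 ?pnatr_eq0 //.
  by rewrite -lt0n fact_gt0.
rewrite /legendre !hornerZ; split.
- rewrite sq_at1 derivn_XsubC_exp_at horner_exp hornerXsubC opprK.
  by rewrite (_ : 1 + 1 = 2 :> R) // K_inv.
- rewrite sq_atm1 derivn_XsubC_exp_at horner_exp hornerXsubC.
  rewrite (_ : -1 - 1 = (-1) * 2 :> R); last by ring.
  by rewrite exprMn [n`!%:R * _]mulrCA [_^-1 * _]mulrCA K_inv mulr1.
Qed.

Lemma size_legendre n : (size (legendre R n) <= n.+1)%N.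
Proof.
apply: leq_trans (size_scale_leq _ _) _; apply/leq_sizeP => i ni.
have sq_size : (size (('X ^+ 2 - 1 : {poly R}) ^+ n) <= (2 * n).+1)%N.
  by apply: leq_trans (size_poly_exp_leq _ _) _; rewrite -polyC1 size_XnsubC.
by rewrite coef_derivn (leq_sizeP _ _ sq_size) ?mul0rn //; lia.
Qed.

End LegendreEnds.

Definition node_poly (R : fieldType) n (g : 'I_n -> R) : {poly R} :=
  \prod_(i < n) ('X - (g i)%:P).

Section NodePolynomial.
Variables (R : fieldType) (n : nat) (g : 'I_n -> R).

Lemma node_poly_monic : node_poly g \is monic.
Proof. exact: monic_prod_XsubC. Qed.

Lemma size_node_poly : size (node_poly g) = n.+1.
Proof. by rewrite size_prod_XsubC /index_enum -enumT size_enum_ord. Qed.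

Lemma node_poly_dvdp (E : {poly R}) : injective g ->
  (forall i, root E (g i)) -> node_poly g %| E.
Proof.
move=> g_inj Eg; rewrite /node_poly -(big_map g predT (fun z => 'X - z%:P)).
apply: uniq_roots_dvdp; first by apply/allP => _ /mapP[i _ ->].
by rewrite uniq_rootsE map_inj_uniq ?index_enum_uniq.
Qed.

End NodePolynomial.

(* If the nodes are the distinct zeros of an odd-degree Legendre polynomial,
   the node polynomial is a nonzero multiple of it, so it inherits its end
   values up to a common factor: N(1) != 0 and N(-1) = -N(1). *)
Lemma node_poly_legendre_ends (R : numFieldType) n (g : 'I_n -> R) :
  odd n -> injective g -> (forall i, root (legendre R n) (g i)) ->
  (node_poly g).[1] != 0 /\ (node_poly g).[-1] = - (node_poly g).[1].
Proof.
move=> n_odd g_inj g_root; have [L1 Lm1] := legendre_ends R n.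
rewrite -signr_odd n_odd expr1 in Lm1.
have L_neq0 : legendre R n != 0.
  by apply/eqP => L0; move: L1; rewrite L0 horner0 => /eqP; rewrite eq_sym oner_eq0.
have N_L := node_poly_dvdp g_inj g_root.
have : node_poly g %= legendre R n.
  by rewrite -dvdp_size_eqp // eqn_leq dvdp_leq //= size_node_poly size_legendre.
move=> /eqpP[[c1 c2] /= /andP[c1_neq0 c2_neq0] c12].
have N_val x : (node_poly g).[x] = c2 / c1 * (legendre R n).[x].
  by apply: (mulfI c1_neq0); rewrite -hornerZ c12 hornerZ mulrA mulrCA mulfV // mulr1.
by rewrite !N_val L1 Lm1 mulr1 mulrN1 mulf_neq0 ?invr_eq0.
Qed.

Section EdgeTraces.
Variables (R : fieldType) (m : nat) (N : {poly R}).
Hypotheses (N_monic : N \is monic) (size_N : size N = m.+1).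

Lemma edge_factor (E : {poly R}) : N %| E -> (size E <= m.+2)%N ->
  exists beta, E = (E`_m.+1 *: 'X + beta%:P) * N.
Proof.
move=> N_E size_E; set q := E %/ N.
have E_q : E = q * N by rewrite divpK.
have size_q : (size q <= 2)%N.
  by rewrite size_divp ?monic_neq0 // size_N /= leq_subLR addn2.
have q_lin : q = q`_1 *: 'X + (q`_0)%:P.
  apply/polyP => i; rewrite coefD coefZ coefX coefC.
  case: i => [|[|i]]; rewrite ?mulr0 ?mulr1 ?add0r ?addr0 //=.
  by rewrite (leq_sizeP _ _ size_q).
have N_top : N`_m = 1 by move/monicP: N_monic; rewrite lead_coefE size_N.
have E_top : E`_m.+1 = q`_1.
  rewrite E_q {1}q_lin mulrDl -scalerAl mul_polyC coefD !coefZ coefXM /= N_top.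
  by rewrite (leq_sizeP _ _ (eq_leq size_N)) // mulr0 addr0 mulr1.
by exists q`_0; rewrite E_top -q_lin.
Qed.

Lemma edge_multiple (E : {poly R}) : N %| E -> (size E <= m.+2)%N ->
  E`_m.+1 = 0 -> forall t, E.[t] = E`_m * N.[t].
Proof.
move=> N_E size_E; have [beta E_eq top0] := edge_factor N_E size_E.
rewrite top0 scale0r add0r mul_polyC in E_eq.
have N_top : N`_m = 1 by move/monicP: N_monic; rewrite lead_coefE size_N.
by move=> t; rewrite E_eq coefZ N_top mulr1 hornerZ.
Qed.

Hypothesis N_odd_ends : N.[-1] = - N.[1].

Lemma edge_ends_sum (E : {poly R}) : N %| E -> (size E <= m.+2)%N ->
  E.[1] + E.[-1] = (E`_m.+1 * N.[1]) *+ 2.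
Proof.
move=> N_E size_E; have [beta] := edge_factor N_E size_E.
set alpha := E`_m.+1 => ->.
by rewrite !hornerM !hornerD !hornerZ !hornerX !hornerC N_odd_ends; ring.
Qed.

End EdgeTraces.

Definition er_fun (R : pzRingType) m (p : R -> R -> R) (a b : R) (x y : R) : R :=
  p x y + a * (x ^+ m * y - x * y ^+ m) + b * (x ^+ m.+1 - y ^+ m.+1).

Section ERTraces.
Variables (R : comNzRingType) (m : nat).

(* For m = 1 the first extra function x^m y - x y^m vanishes identically, so
   its coefficient can be taken to be zero. *)
Lemma inER_er_fun (v : R -> R -> R) : inER m v ->
  exists p a b, [/\ inP m p, (m = 1%N -> a = 0) &
                    forall x y, v x y = er_fun m p a b x y].
Proof.
move=> [p [a [b [pP v_eq]]]]; have [m1|m_neq1] := eqVneq m 1%N.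
  by exists p, 0, b; split=> // x y; rewrite v_eq /er_fun m1 !expr1 subrr mulr0 mul0r.
by exists p; exists a; exists b; split=> // m1; rewrite m1 eqxx in m_neq1.
Qed.

Lemma er_fun_swap (p : R -> R -> R) (a b x y : R) :
  er_fun m p a b y x = er_fun m (fun x y => p y x) (- a) (- b) x y.
Proof. by rewrite /er_fun; ring. Qed.

Lemma er_fun_rows (p : R -> R -> R) (a b : R) :
  (0 < m)%N -> inP m p -> (m = 1%N -> a = 0) ->
  exists (V : R -> {poly R}) (c : R), forall x0,
    [/\ forall y, er_fun m p a b x0 y = (V x0).[y], (size (V x0) <= m.+2)%N,
        (V x0)`_m.+1 = - b & (V x0)`_m = c - a * x0].
Proof.
move=> m_gt0 pP a0; have [F [c F_p]] := inP_rows pP.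
exists (fun x0 => F x0 + a *: (x0 ^+ m *: 'X - x0 *: 'X^m)
                  + b *: ((x0 ^+ m.+1)%:P - 'X^(m.+1))), c => x0.
have [F_val size_F F_top] := F_p x0.
have F_out i : (m < i)%N -> (F x0)`_i = 0 by move=> mi; apply: (leq_sizeP _ _ size_F).
split.
- by move=> y; rewrite /er_fun F_val !hornerE.
- apply/leq_sizeP => i mi; rewrite !coefE F_out; last by lia.
  by rewrite !gtn_eqF /=; try lia; ring.
- by rewrite !coefE F_out // eqxx !gtn_eqF /=; try lia; ring.
- rewrite !coefE F_top eqxx.
  rewrite (gtn_eqF m_gt0) (ltn_eqF (ltnSn m)) /=.
  by case: (eqVneq m 1%N) => [m1|_]; rewrite mulrb /=; [rewrite a0 // |]; ring.
Qed.

End ERTraces.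

Section GaussBoundary.
Variables (R : realFieldType) (m : nat) (g : 'I_m -> R).
Variables (p : R -> R -> R) (a b : R) (v : R -> R -> R).
Hypotheses (m_gt0 : (0 < m)%N) (g_inj : injective g).
Hypotheses (N1_neq0 : (node_poly g).[1] != 0)
           (N_odd_ends : (node_poly g).[-1] = - (node_poly g).[1]).
Hypotheses (pP : inP m p) (a0 : m = 1%N -> a = 0)
           (v_eq : forall x y, v x y = er_fun m p a b x y).
Hypothesis v_G : forall i, v 1 (g i) = 0 /\ v (-1) (g i) = 0 /\
                           v (g i) 1 = 0 /\ v (g i) (-1) = 0.

(* Each edge trace is (alpha X + beta) N, where alpha and
   beta are read off the top coefficients; comparing the four corner values,
   first with the alphas (= -b, -b, b, b) and then with the betas, forces all
   these numbers to vanish. *)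
Lemma er_fun_gauss_boundary :
  [/\ a = 0, b = 0, forall y, v 1 y = 0 /\ v (-1) y = 0
                  & forall x, v x 1 = 0 /\ v x (-1) = 0].
Proof.
set N := node_poly g; set lam := N.[1].
have [N_monic size_N] := (node_poly_monic g, size_node_poly g).
have [V [c V_p]] := er_fun_rows b m_gt0 pP a0.
have a0' : m = 1%N -> - a = 0 by move=> /a0 ->; rewrite oppr0.
have [W [c' W_p]] := er_fun_rows (- b) m_gt0 (inP_swap pP) a0'.
have v_row x y : v x y = (V x).[y] by rewrite v_eq; case: (V_p x) => ->.
have v_col x y : v x y = (W y).[x] by rewrite v_eq er_fun_swap; case: (W_p y) => ->.
have [N_V1 N_Vm1 N_W1 N_Wm1] : [/\ N %| V 1, N %| V (-1), N %| W 1 & N %| W (-1)].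
  by split; apply: node_poly_dvdp => // i; rewrite /root -?v_row -?v_col;
     have [? [? [? ?]]] := v_G i; apply/eqP.
have lam_cancel x : x * lam = 0 -> x = 0.
  by move/eqP; rewrite mulf_eq0 (negbTE N1_neq0) orbF => /eqP.
have [[_ sV1 tV1 cV1] [_ sVm1 tVm1 cVm1]] := (V_p 1, V_p (-1)).
have [[_ sW1 tW1 cW1] [_ sWm1 tWm1 cWm1]] := (W_p 1, W_p (-1)).
have b0 : b = 0.
  have sum_ends := edge_ends_sum N_monic size_N N_odd_ends.
  have := sum_ends _ N_V1 sV1; have := sum_ends _ N_Vm1 sVm1.
  have := sum_ends _ N_W1 sW1; have := sum_ends _ N_Wm1 sWm1.
  rewrite tV1 tVm1 tW1 tWm1 -!v_row -!v_col opprK -/lam => ? ? ? ?.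
  by apply: lam_cancel; lra.
have trace := edge_multiple N_monic size_N.
have row1 t : v 1 t = (c - a) * N.[t].
  by rewrite v_row (trace _ N_V1 sV1) ?tV1 ?b0 ?oppr0 // cV1 mulr1.
have rowm1 t : v (-1) t = (c + a) * N.[t].
  by rewrite v_row (trace _ N_Vm1 sVm1) ?tVm1 ?b0 ?oppr0 // cVm1 mulrN1 opprK.
have col1 t : v t 1 = (c' + a) * N.[t].
  by rewrite v_col (trace _ N_W1 sW1) ?tW1 ?b0 ?oppr0 // cW1 mulr1 opprK.
have colm1 t : v t (-1) = (c' - a) * N.[t].
  by rewrite v_col (trace _ N_Wm1 sWm1) ?tWm1 ?b0 ?oppr0 // cWm1 mulrN1 opprK.
have := row1 1; have := row1 (-1); have := rowm1 1; have := rowm1 (-1).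
rewrite !col1 !colm1 !N_odd_ends -/lam => ? ? ? ?.
have [a0l [cl c'l]] : [/\ a * lam = 0, c * lam = 0 & c' * lam = 0] by split; lra.
have [a_0 c_0 c'_0] : [/\ a = 0, c = 0 & c' = 0] by split; apply: lam_cancel.
split=> // [y|x]; split;
  by rewrite ?row1 ?rowm1 ?col1 ?colm1 a_0 ?c_0 ?c'_0 ?subrr ?addr0 mul0r.
Qed.

End GaussBoundary.

Unset Implicit Arguments. Set Strict Implicit.

Theorem theorem3p1 (R : rcfType) (k : nat)
  (g : 'I_(2 * k + 1) -> R)
  (g_inj : injective g)
  (g_root : forall i, root (legendre R (2 * k + 1)) (g i))
  (I : 'I_((2 * k - 1) * (k - 1)) -> R * R)
  (I_int : forall i, -1 < (I i).1 < 1 /\ -1 < (I i).2 < 1)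
  (I_unisolvent : (1 < k)%N ->
     forall p q : R -> R -> R,
       inP (2 * k - 3) p -> inP (2 * k - 3) q ->
       (forall i, p (I i).1 (I i).2 = q (I i).1 (I i).2) ->
       forall x y, p x y = q x y)
  (v : R -> R -> R)
  (v_ER : inER (2 * k + 1) v)
  (v_G : forall i, v 1 (g i) = 0 /\ v (-1) (g i) = 0 /\
                   v (g i) 1 = 0 /\ v (g i) (-1) = 0)
  (v_I : forall i, v (I i).1 (I i).2 = 0) :
  forall x y, v x y = 0.
Proof.
have m_gt0 : (0 < 2 * k + 1)%N by rewrite addn1.
have m_odd : odd (2 * k + 1) by rewrite addn1 /= mul2n odd_double.
have [p [a [b [pP a0 v_eq]]]] := inER_er_fun v_ER.
have [N1 N_ends] := node_poly_legendre_ends m_odd g_inj g_root.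
have [a_0 b_0 v_x v_y] := er_fun_gauss_boundary m_gt0 g_inj N1 N_ends pP a0 v_eq v_G.
have vP : inP (2 * k + 1) v.
  by apply: inP_ext pP => x y; rewrite v_eq /er_fun a_0 b_0 !mul0r !addr0.
have [v_small [q [qP v_q]]] := inP_boundary_factor vP (fun y => (v_x y).1)
  (fun y => (v_x y).2) (fun x => (v_y x).1) (fun x => (v_y x).2).
move=> x y; have [k_gt1|k_le1] := ltnP 1 k; last by apply: v_small; lia.
suff q0 : forall x y, q x y = 0 by rewrite v_q q0 mulr0.
apply: (I_unisolvent k_gt1 q (fun _ _ => 0)) => [||i].
- by rewrite (_ : 2 * k - 3 = 2 * k + 1 - 4)%N //; lia.
- exact: inP0.
- have [/andP[x_gt x_lt] /andP[y_gt y_lt]] := I_int i.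
  have bubble_neq0 : ((I i).1 ^+ 2 - 1) * ((I i).2 ^+ 2 - 1) != 0.
    by rewrite mulf_neq0 // lt_eqF // subr_lt0; nra.
  by apply/eqP; have := v_I i; rewrite v_q => /eqP; rewrite mulf_eq0 (negbTE bubble_neq0).
Qed.
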